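(* Let $E$ be a finite set and $w\geq 1$ an integer. The map $\mathcal{D}:[0,\infty]^E\to[0,|E|]$ defined by $$\mathcal{D}(\mathbf{Y})=\sum_{e\in E}\frac{Y_e\mathcal{R}_e(\mathbf{Y})}{1+Y_e\mathcal{R}_e(\mathbf{Y})}\mathbf{1}(Y_e<\infty)+\min\Big(w,\sum_{e\in E}\mathbf{1}(Y_e=\infty)\Big)$$ is continuous (and coincides with $\sum_{e}\frac{Y_e\mathcal{R}_e(\mathbf{Y})}{1+Y_e\mathcal{R}_e(\mathbf{Y})}$ on $[0,\infty)^E$).
   Context: For $S\subseteq E$, $\mathbf{Y}^S=\prod_{f\in S}Y_f$, $\mathbf{Y}^\emptyset=1$. For $e\in E$, $\mathcal{R}_e$ is the map $[0,\infty]^{E\setminus\{e\}}\to[0,1]$ (applied to the coordinates of $\mathbf{Y}$ other than $e$) given on finite vectors by $\mathcal{R}_e(\mathbf{Y})=\frac{\sum_{S\subseteq E\setminus\{e\},|S|\leq w-1}\mathbf{Y}^S}{\sum_{S\subseteq E\setminus\{e\},|S|\leq w}\mathbf{Y}^S}$ and in general as follows: with $E'_e(\mathbf{Y})=\{f\neq e:Y_f=\infty\}$, if $|E'_e(\mathbf{Y})|<w$ then $\mathcal{R}_e(\mathbf{Y})=\frac{\sum_{S\subseteq E\setminus(E'_e\cup\{e\}),|S|\leq w-|E'_e|-1}\mathbf{Y}^S}{\sum_{S\subseteq E\setminus(E'_e\cup\{e\}),|S|\leq w-|E'_e|}\mathbf{Y}^S}$, and if $|E'_e(\mathbf{Y})|\geq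 w$ then $\mathcal{R}_e(\mathbf{Y})=0$. *)

From mathcomp Require Import all_boot.
From Stdlib Require Import Reals.

Set Implicit Arguments.
Unset Strict Implicit.
Unset Printing Implicit Defensive.

(* Extended nonnegative half-line [0, oo]: finite values or oo. *)
Inductive xR : Type := Fin (r : R) | Inf.

Definition isInf (a : xR) : bool := if a is Inf then true else false.
Definition isFin (a : xR) : bool := ~~ isInf a.
(* real part of a finite value (0 for oo; only used on finite coordinates) *)
Definition fpart (a : xR) : R := if a is Fin r then r else 0%R.

Definition nonneg_x (a : xR) : Prop :=
  match a with Fin r => (0 <= r)%R | Inf => True end.

Section Defs.
Variable E : finType.
Variable w : nat.

Definition monom (Y : E -> xR) (S : {set E}) : R :=
  \big[Rmult/1%R]_(f in S) fpart (Y f).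

Definition Eprime (e : E) (Y : E -> xR) : {set E} :=
  [set f | (f != e) && isInf (Y f)].

Definition subsum (Y : E -> xR) (A : {set E}) (k : nat) : R :=
  \big[Rplus/0%R]_(S : {set E} | (S \subset A) && (#|S| <= k)%N) monom Y S.

Definition Rmap (e : E) (Y : E -> xR) : R :=
  let E' := Eprime e Y in
  if (#|E'| < w)%N then
    Rdiv (subsum Y (~: (E' :|: [set e])) (w - #|E'| - 1))
         (subsum Y (~: (E' :|: [set e])) (w - #|E'|))
  else 0%R.

Definition Rmap_fin (e : E) (Y : E -> xR) : R :=
  Rdiv (subsum Y (~: [set e]) (w - 1)) (subsum Y (~: [set e]) w).

Definition term (y r : R) : R := Rdiv (y * r)%R (1 + y * r)%R.

Definition Dmap (Y : E -> xR) : R :=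
  (\big[Rplus/0%R]_(e : E)
     (if isFin (Y e) then term (fpart (Y e)) (Rmap e Y) else 0%R)
   + INR (minn w #|[set e | isInf (Y e)]|))%R.

End Defs.

(* Neighbourhood base of the order topology on [0, oo]:
   around a finite point x: finite points y with |y - x| < d;
   around oo: oo itself and finite points y > M. *)
Definition near_xR (d M : R) (a b : xR) : Prop :=
  match a, b with
  | Fin x, Fin y => (Rabs (y - x) < d)%R
  | Fin _, Inf => False
  | Inf, Inf => True
  | Inf, Fin y => (M < y)%R
  end.

Definition continuous_on_xR (E : finType) (f : (E -> xR) -> R) : Prop :=
  forall Y : E -> xR, (forall e, nonneg_x (Y e)) ->
  forall eps : R, (0 < eps)%R ->
  exists d : R, (0 < d)%R /\ exists M : R,
    forall Z : E -> xR, (forall e, nonneg_x (Z e)) ->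
      (forall e, near_xR d M (Y e) (Z e)) ->
      (Rabs (f Z - f Y) < eps)%R.

(* For a vector Z with all coordinates finite, D(Z) is the mean size of a
   random subset S of E with |S| <= w drawn with weight Z^S: writing
   T = sum_{|S|<=w} Z^S and V = sum_{|S|<=w} |S| Z^S, we have D(Z) = V / T.
   This follows from the deletion recurrence for the truncated subset sums
   (lemma [sum_term_eq_mean_size]).  More generally, if Y has the set F of
   infinite coordinates, then D(Y) = w when |F| >= w and otherwise
   D(Y) = |F| + V'/U', where U', V' are the analogous sums over subsets of
   the finite coordinates of size at most w - |F| ([Dmap_many_inf],
   [Dmap_few_inf]).  The bounds 0 <= D <= |E| and the finite formula are
   immediate from these closed forms.

   Continuity is first proved at Y along all-finite vectors Z close to Y
   ([Dmap_cont_allfin]).  If the coordinates of Z on F exceed M, every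
   weight Z^S with |S| <= w that misses some f in F, and either has room
   for f or contains a finite coordinate of Y to exchange for f, is at most
   bnd(Y) T / M ([small_monomial]).  Hence V/T is within O(1/M) of w when
   |F| >= w ([Dmap_near_many_inf]) and of the closed form |F| + V'/U'
   evaluated at Z otherwise ([Dmap_near_few_inf]); the latter is a ratio of
   polynomials in the finite coordinates, hence close to D(Y).  Finally,
   any Z close to Y is approximated by an all-finite vector close to both
   Y and Z ([Dmap_continuous]). *)

From HB Require Import structures.
From mathcomp Require Import all_boot zify.
From Stdlib Require Import Reals Lra.

Set Implicit Arguments.
Unset Strict Implicit.
Unset Printing Implicit Defensive.

(* Reals rebinds %N; the statement uses it for ssrnat comparisons. *)
Delimit Scope nat_scope with N.
Local Open Scope R_scope.

Lemma Rplus_assoc' : associative Rplus. Proof. by move=> x y z; ring. Qed.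
Lemma Rmult_assoc' : associative Rmult. Proof. by move=> x y z; ring. Qed.
HB.instance Definition _ := Monoid.isComLaw.Build R 0 Rplus
  Rplus_assoc' Rplus_comm Rplus_0_l.
HB.instance Definition _ := Monoid.isComLaw.Build R 1 Rmult
  Rmult_assoc' Rmult_comm Rmult_1_l.
HB.instance Definition _ := Monoid.isMulLaw.Build R 0 Rmult Rmult_0_l Rmult_0_r.
HB.instance Definition _ := Monoid.isAddLaw.Build R Rmult Rplus
  Rmult_plus_distr_r Rmult_plus_distr_l.

Lemma sumR_ge0 (I : Type) (r : seq I) (P : pred I) (F : I -> R) :
  (forall i, P i -> 0 <= F i) -> 0 <= \big[Rplus/0]_(i <- r | P i) F i.
Proof. by move=> H; apply: big_ind => //; [lra | move=> x y; lra]. Qed.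

Lemma prodR_ge0 (I : Type) (r : seq I) (P : pred I) (F : I -> R) :
  (forall i, P i -> 0 <= F i) -> 0 <= \big[Rmult/1]_(i <- r | P i) F i.
Proof. by move=> H; apply: big_ind => //; [lra | move=> x y; nra]. Qed.

Lemma sumR_le (I : Type) (r : seq I) (P : pred I) (F G : I -> R) :
  (forall i, P i -> F i <= G i) ->
  \big[Rplus/0]_(i <- r | P i) F i <= \big[Rplus/0]_(i <- r | P i) G i.
Proof.
by move=> H; apply: (big_ind2 (fun a b => a <= b)) => //; [lra | move=> *; lra].
Qed.

Lemma sumR_abs (I : Type) (r : seq I) (P : pred I) (F : I -> R) :
  Rabs (\big[Rplus/0]_(i <- r | P i) F i) <= \big[Rplus/0]_(i <- r | P i) Rabs (F i).
Proof.
apply: (big_ind2 (fun a b => Rabs a <= b)) => [|x1 x2 y1 y2 h1 h2|i _].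
- by rewrite Rabs_R0; lra.
- by apply: Rle_trans (Rabs_triang _ _) _; lra.
- lra.
Qed.

Lemma sumRB (I : Type) (r : seq I) (P : pred I) (F G : I -> R) :
  \big[Rplus/0]_(i <- r | P i) (F i - G i) =
  \big[Rplus/0]_(i <- r | P i) F i - \big[Rplus/0]_(i <- r | P i) G i.
Proof.
apply: (big_ind3 (fun a b c => a = b - c)) => // [|x1 x2 y1 y2 z1 z2 -> ->]; lra.
Qed.

Lemma sumR_const (I : finType) (A : {pred I}) (c : R) :
  \big[Rplus/0]_(i in A) c = INR #|A| * c.
Proof.
rewrite big_const; elim: #|A| => [|n IH]; first by rewrite /=; lra.
by rewrite iterS IH S_INR; lra.
Qed.

Lemma sumR_le_card (I : finType) (P : pred I) (F : I -> R) (c : R) :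
  0 <= c -> (forall i, P i -> F i <= c) ->
  \big[Rplus/0]_(i | P i) F i <= INR #|I| * c.
Proof.
move=> c0 H; rewrite big_mkcond /= -(sumR_const predT) /=.
by apply: sumR_le => i _; case: ifP => [/H|].
Qed.

Lemma sumR_ge_term (I : finType) (P : pred I) (F : I -> R) (j : I) :
  P j -> (forall i, P i -> 0 <= F i) -> F j <= \big[Rplus/0]_(i | P i) F i.
Proof.
move=> Pj H; rewrite (bigD1 j) //=.
suff : 0 <= \big[Rplus/0]_(i | P i && (i != j)) F i by lra.
by apply: sumR_ge0 => i /andP [/H].
Qed.

Lemma prodR_bound (I : eqType) (r : seq I) (b : I -> R) (B : R) :
  (forall i, i \in r -> 0 <= b i <= B) -> 0 <= \big[Rmult/1]_(i <- r) b i <= B ^ size r.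
Proof.
elim: r => [|x r IH] H; first by rewrite big_nil /=; lra.
have [b0 bB] := H x (mem_head _ _).
have [P0 PB] : 0 <= \big[Rmult/1]_(i <- r) b i <= B ^ size r.
  by apply: IH => i ir; apply: H; rewrite inE ir orbT.
by rewrite big_cons /=; split; [nra | apply: Rmult_le_compat].
Qed.

Lemma prodR_close (I : eqType) (r : seq I) (a b : I -> R) (B d : R) :
  1 <= B -> 0 <= d ->
  (forall i, i \in r -> 0 <= a i <= B /\ 0 <= b i <= B /\ Rabs (a i - b i) <= d) ->
  Rabs (\big[Rmult/1]_(i <- r) a i - \big[Rmult/1]_(i <- r) b i)
    <= INR (size r) * B ^ size r * d.
Proof.
move=> B1 d0; elim: r => [|x r IH] H.
  by rewrite !big_nil /= Rminus_diag Rabs_R0; lra.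
have Hr i : i \in r -> 0 <= a i <= B /\ 0 <= b i <= B /\ Rabs (a i - b i) <= d.
  by move=> ir; apply: H; rewrite inE ir orbT.
have [[a0 aB] [[b0 bB] ab]] := H x (mem_head _ _).
have [Pb0 PbB] := prodR_bound (fun i ir => proj1 (proj2 (Hr i ir))).
have {}IH := IH Hr.
rewrite !big_cons [size _]/= S_INR /=.
set Pa := \big[Rmult/1]_(i <- r) a i in IH *.
set Pb := \big[Rmult/1]_(i <- r) b i in IH Pb0 PbB *.
set X := B ^ size r in IH PbB *; set s := INR (size r) in IH *.
have X0 : 0 <= X by apply: pow_le; lra.
have s0 : 0 <= s := pos_INR _.
have -> : a x * Pa - b x * Pb = a x * (Pa - Pb) + (a x - b x) * Pb by ring.
apply: Rle_trans (Rabs_triang _ _) _.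
rewrite !Rabs_mult (Rabs_pos_eq (a x)) // (Rabs_pos_eq Pb) //.
have e1 : a x * Rabs (Pa - Pb) <= B * (s * X * d).
  by apply: Rmult_le_compat => //; apply: Rabs_pos.
have e2 : Rabs (a x - b x) * Pb <= d * X.
  by apply: Rmult_le_compat => //; apply: Rabs_pos.
have e3 : 0 <= X * d * (B - 1) by apply: Rmult_le_pos; [nra | lra].
nra.
Qed.

Lemma div_ge0 (a b : R) : 0 < b -> 0 <= a -> 0 <= a / b.
Proof. by move=> b0 a0; apply: Rmult_le_pos => //; apply/Rlt_le/Rinv_0_lt_compat. Qed.

Lemma div_le (a b c : R) : 0 < b -> a <= c * b -> a / b <= c.
Proof.
move=> b0 h; have -> : c = c * b * / b by field; lra.
by apply: Rmult_le_compat_r => //; apply/Rlt_le/Rinv_0_lt_compat.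
Qed.

Lemma ratio_close (V U V0 U0 : R) : 1 <= U -> 1 <= U0 -> 0 <= V0 ->
  Rabs (V / U - V0 / U0) <= Rabs (V - V0) * U0 + V0 * Rabs (U - U0).
Proof.
move=> U1 U01 V00.
have -> : V / U - V0 / U0 = ((V - V0) * U0 - V0 * (U - U0)) * / (U * U0).
  by field; lra.
have iUU : 0 < / (U * U0) <= 1.
  split; first by apply: Rinv_0_lt_compat; nra.
  by rewrite -Rinv_1; apply: Rinv_le_contravar; nra.
rewrite Rabs_mult (Rabs_pos_eq (/ (U * U0))); last lra.
have hN : Rabs ((V - V0) * U0 - V0 * (U - U0)) <= Rabs (V - V0) * U0 + V0 * Rabs (U - U0).
  apply: Rle_trans (Rabs_triang _ _) _.
  by rewrite Rabs_Ropp !Rabs_mult (Rabs_pos_eq U0) ?(Rabs_pos_eq V0); lra.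
have := Rabs_pos ((V - V0) * U0 - V0 * (U - U0)); nra.
Qed.

Lemma exists_large (X eps : R) : 0 <= X -> 0 < eps -> exists M, 1 <= M /\ X / M < eps.
Proof.
move=> X0 e0; exists (X / eps + 1).
have h : 0 <= X / eps by apply: div_ge0.
split; first lra.
apply: (Rmult_lt_reg_r (X / eps + 1)); first lra.
have -> : X / (X / eps + 1) * (X / eps + 1) = X by field; lra.
have -> : eps * (X / eps + 1) = X + eps by field; lra.
lra.
Qed.

Lemma mixture_close (A L L1 c b : R) : 0 <= A -> 0 <= L -> 0 < A + L ->
  0 <= c <= b -> 0 <= L1 <= b * L ->
  Rabs ((c * A + L1) / (A + L) - c) <= b * L / (A + L).
Proof.
move=> A0 L0 T0 cb L1b.
have -> : (c * A + L1) / (A + L) - c = (L1 - c * L) / (A + L) by field; lra.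
rewrite /Rdiv Rabs_mult (Rabs_pos_eq (/ (A + L))); last by apply/Rlt_le/Rinv_0_lt_compat.
apply: Rmult_le_compat_r; first by apply/Rlt_le/Rinv_0_lt_compat.
by apply: Rabs_le; nra.
Qed.

Section SubsetSums.
Variable E : finType.
Implicit Types (Y Z : E -> xR) (A F S : {set E}).

(* Sum over the subsets S of A with |S| <= n of |S| Y^S: multiplied by the
   inverse of [subsum Y A n], the mean size of a Y^S-weighted subset. *)
Definition sizesum Y A (n : nat) : R :=
  \big[Rplus/0]_(S : {set E} | (S \subset A) && (#|S| <= n)%nat) (INR #|S| * monom Y S).

Definition nonnegY Y := forall e, nonneg_x (Y e).

Lemma fpart_ge0 a : nonneg_x a -> 0 <= fpart a.
Proof. by case: a => [r|] //= _; lra. Qed.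

Lemma monom_ge0 Y S : nonnegY Y -> 0 <= monom Y S.
Proof. by move=> HY; apply: prodR_ge0 => i _; apply: fpart_ge0. Qed.

Lemma monomU1 Y e S : e \notin S -> monom Y (e |: S) = fpart (Y e) * monom Y S.
Proof. by move=> eS; rewrite /monom big_setU1. Qed.

Lemma monomU Y F S : [disjoint F & S] -> monom Y (F :|: S) = monom Y F * monom Y S.
Proof. by move=> FS; rewrite /monom -bigU //=; apply: eq_bigl => i; rewrite !inE. Qed.

(* The empty set contributes 1 to every truncated subset sum. *)
Lemma subsum_ge1 Y A k : nonnegY Y -> 1 <= subsum Y A k.
Proof.
move=> HY; have <- : monom Y set0 = 1 by rewrite /monom big_set0.
apply: sumR_ge_term; first by rewrite sub0set cards0.
by move=> S _; apply: monom_ge0.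
Qed.

Lemma sizesum_ge0 Y A n : nonnegY Y -> 0 <= sizesum Y A n.
Proof.
by move=> HY; apply: sumR_ge0 => S _; apply: Rmult_le_pos; [apply: pos_INR | apply: monom_ge0].
Qed.

Lemma sizesum_le Y A n : nonnegY Y -> sizesum Y A n <= INR n * subsum Y A n.
Proof.
move=> HY; rewrite /subsum big_distrr /=; apply: sumR_le => S /andP [_ Sn].
by apply: Rmult_le_compat_r; [apply: monom_ge0 | apply/le_INR/leP].
Qed.

Lemma sizesum_le_card Y A n : nonnegY Y -> sizesum Y A n <= INR #|A| * subsum Y A n.
Proof.
move=> HY; rewrite /subsum big_distrr /=; apply: sumR_le => S /andP [SA _].
by apply: Rmult_le_compat_r; [apply: monom_ge0 | apply/le_INR/leP/subset_leq_card].
Qed.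

Lemma sum_supersets A F (n : nat) (g : {set E} -> R) : F \subset A -> (#|F| <= n)%nat ->
  \big[Rplus/0]_(S : {set E} | (S \subset A) && (#|S| <= n)%nat && (F \subset S)) g S =
  \big[Rplus/0]_(S : {set E} | (S \subset A :\: F) && (#|S| <= n - #|F|)%nat) g (F :|: S).
Proof.
move=> FA Fn.
rewrite (reindex_onto (fun S => F :|: S) (fun S => S :\: F)) /=; last first.
  move=> S /andP [_ FS]; apply/setP => x; rewrite !inE.
  by case: (boolP (x \in F)) => // xF; rewrite (subsetP FS).
apply: eq_bigl => S; case: (boolP (S \subset A :\: F)) => HS /=.
  move: (HS); rewrite subsetD => /andP [SA dSF].
  have FS0 : F :&: S = set0 by apply/eqP; rewrite setI_eq0 disjoint_sym.
  have -> : (F :|: S) :\: F = S by rewrite setDUl setDv set0U; apply/setDidPl.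
  rewrite eqxx subsetUl subUset FA SA /= !andbT.
  have := cardsUI F S; rewrite FS0 cards0 addn0 => ->.
  by apply/idP/idP; lia.
apply/negbTE; apply: contra HS => /andP [/andP [/andP [FSA _] _] /eqP <-].
exact: setSD.
Qed.

Lemma sum_containing Y A e (m : nat) : e \in A ->
  \big[Rplus/0]_(S : {set E} | (S \subset A) && (#|S| <= m.+1)%nat && (e \in S)) monom Y S
  = fpart (Y e) * subsum Y (A :\ e) m.
Proof.
move=> eA.
rewrite (eq_bigl (fun S => (S \subset A) && (#|S| <= m.+1)%nat && ([set e] \subset S)));
  last by move=> S; rewrite sub1set.
rewrite sum_supersets ?sub1set ?cards1 // subn1 /= /subsum big_distrr /=.
apply: eq_bigr => S /andP [SA _]; apply: monomU1.
by move: SA; rewrite subsetD1 => /andP [].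
Qed.

Lemma subsum_split Y A e (m : nat) : e \in A ->
  subsum Y A m.+1 = subsum Y (A :\ e) m.+1 + fpart (Y e) * subsum Y (A :\ e) m.
Proof.
move=> eA; rewrite {1}/subsum (bigID (fun S => e \in S)) /= sum_containing //.
rewrite Rplus_comm; congr (_ + _); rewrite /subsum; apply: eq_bigl => S.
rewrite subsetD1.
by case: (S \subset A); case: (e \in S); case: (#|S| <= m.+1)%nat.
Qed.

Lemma term_div y a b : 0 <= y -> 0 <= a -> 0 < b -> term y (a / b) = y * a / (b + y * a).
Proof.
move=> y0 a0 b0; rewrite /term.
have : 0 <= y * (a / b) by apply: Rmult_le_pos => //; apply: div_ge0.
by move=> h; field; split; nra.
Qed.

(* By the recurrence, the e-th
   term is the weight of the subsets containing e divided by S_(m+1)(A);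
   summing over e counts every subset |S| times. *)
Lemma sum_term_eq_mean_size Y A (m : nat) : nonnegY Y ->
  \big[Rplus/0]_(e in A) term (fpart (Y e)) (subsum Y (A :\ e) m / subsum Y (A :\ e) m.+1)
  = sizesum Y A m.+1 / subsum Y A m.+1.
Proof.
move=> HY.
under eq_bigr => e eA.
  rewrite term_div; [|exact: fpart_ge0|by have := subsum_ge1 (A :\ e) m HY; lra
                     |by have := subsum_ge1 (A :\ e) m.+1 HY; lra].
  rewrite -(subsum_split _ _ eA) -sum_containing //.
over.
rewrite -big_distrl /=; congr (_ * _).
under eq_bigr do rewrite big_mkcondr.
rewrite exchange_big /sizesum /=; apply: eq_bigr => S /andP [SA _].
rewrite -big_mkcondr -sumR_const; apply: eq_bigl => e.
by case eS: (e \in S); rewrite ?andbF ?andbT // (subsetP SA).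
Qed.

Definition tailsum (w : nat) Z F : R :=
  \big[Rplus/0]_(S : {set E} | (S \subset setT) && (#|S| <= w)%nat && ~~ (F \subset S)) monom Z S.

Definition tailsizesum (w : nat) Z F : R :=
  \big[Rplus/0]_(S : {set E} | (S \subset setT) && (#|S| <= w)%nat && ~~ (F \subset S))
    (INR #|S| * monom Z S).

Lemma tailsizesum_le (w : nat) Z F : nonnegY Z -> tailsizesum w Z F <= INR w * tailsum w Z F.
Proof.
move=> HZ; rewrite /tailsizesum /tailsum big_distrr /=.
apply: sumR_le => S /andP [/andP [_ Sw] _].
by apply: Rmult_le_compat_r; [apply: monom_ge0 | apply/le_INR/leP].
Qed.

Lemma disjoint_compl S F : S \subset ~: F -> [disjoint F & S].
Proof. by rewrite disjoint_sym disjoints_subset. Qed.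

Lemma subsum_split_superset (w : nat) Z F : (#|F| <= w)%nat ->
  subsum Z setT w = monom Z F * subsum Z (~: F) (w - #|F|) + tailsum w Z F.
Proof.
move=> Fw; rewrite /subsum (bigID (fun S => F \subset S)) /= sum_supersets ?subsetT // setTD.
congr (_ + _); rewrite big_distrr /=; apply: eq_bigr => S /andP [SF _].
by rewrite monomU // disjoint_compl.
Qed.

Lemma sizesum_split_superset (w : nat) Z F : (#|F| <= w)%nat ->
  sizesum Z setT w = monom Z F * (INR #|F| * subsum Z (~: F) (w - #|F|)
                                  + sizesum Z (~: F) (w - #|F|)) + tailsizesum w Z F.
Proof.
move=> Fw; rewrite /sizesum (bigID (fun S => F \subset S)) /= sum_supersets ?subsetT // setTD.
congr (_ + _); rewrite /subsum big_distrr /= -big_split big_distrr /=.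
apply: eq_bigr => S /andP [SF _].
have FS0 : F :&: S = set0 by apply/eqP; rewrite setI_eq0 disjoint_compl.
have := cardsUI F S; rewrite FS0 cards0 addn0 => ->.
by rewrite monomU ?disjoint_compl // plus_INR; ring.
Qed.

End SubsetSums.

Section ClosedForm.
Variables (E : finType) (w : nat).
Implicit Types (Y Z : E -> xR) (F : {set E}).

Definition infset Y : {set E} := [set e | isInf (Y e)].

Definition allfin Y := forall e, isFin (Y e).

Lemma Eprime_finite Y e : isFin (Y e) -> Eprime e Y = infset Y.
Proof.
move=> fin_e; apply/setP => f; rewrite !inE.
by case: eqP => // ->; rewrite (negbTE fin_e).
Qed.

Lemma infset0 Y : allfin Y -> infset Y = set0.
Proof. by move=> fin; apply/setP => e; rewrite !inE; apply/negbTE/fin. Qed.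

(* The mean size of a Z^S-weighted subset S of E with F \subset S and
   |S| <= w (when |F| <= w): |F| plus the mean size of S :\: F. *)
Definition mean_size_above F Z : R :=
  INR #|F| + sizesum Z (~: F) (w - #|F|) / subsum Z (~: F) (w - #|F|).

Lemma Dmap_few_inf Y : nonnegY Y -> (#|infset Y| < w)%nat ->
  Dmap w Y = mean_size_above (infset Y) Y.
Proof.
move=> HY kw.
have [m hm] : exists m, (w - #|infset Y| = m.+1)%nat by exists (w - #|infset Y| - 1)%nat; lia.
rewrite /mean_size_above hm -sum_term_eq_mean_size // /Dmap Rplus_comm.
have -> : minn w #|[set e | isInf (Y e)]| = #|infset Y| by rewrite /infset in kw *; lia.
congr (_ + _); rewrite [RHS]big_mkcond /=; apply: eq_bigr => e _.
rewrite !inE /isFin; case fin_e: (isInf (Y e)) => //=.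
rewrite /Rmap /= Eprime_finite /isFin ?fin_e // kw hm subn1.
have -> // : ~: (infset Y :|: [set e]) = ~: infset Y :\ e.
by apply/setP => x; rewrite !inE negb_or andbC.
Qed.

Lemma Dmap_many_inf Y : (w <= #|infset Y|)%nat -> Dmap w Y = INR w.
Proof.
move=> kw; rewrite /Dmap.
have -> : minn w #|[set e | isInf (Y e)]| = w by rewrite /infset in kw; lia.
rewrite big1; first lra.
move=> e _; rewrite /isFin; case fin_e: (isInf (Y e)) => //=.
by rewrite /Rmap /= Eprime_finite /isFin ?fin_e // ltnNge kw /= /term; lra.
Qed.

Lemma Dmap_finite Y : (1 <= w)%nat -> nonnegY Y -> allfin Y ->
  Dmap w Y = sizesum Y setT w / subsum Y setT w.
Proof.
move=> w_pos HY fin; rewrite Dmap_few_inf // /mean_size_above infset0 // cards0 //.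
have -> : ~: set0 = [set: E] by apply/setP => x; rewrite !inE.
by rewrite subn0 /=; lra.
Qed.

Lemma Dmap_bounds Y : nonnegY Y -> 0 <= Dmap w Y <= INR #|E|.
Proof.
move=> HY; have hN := cardsC (infset Y).
case: (ltnP #|infset Y| w) => kw; last first.
  rewrite Dmap_many_inf //; split; first exact: pos_INR.
  by apply/le_INR/leP; rewrite -hN; lia.
rewrite Dmap_few_inf // /mean_size_above.
set n := (w - #|infset Y|)%nat; set A := ~: infset Y in hN *.
have U1 := subsum_ge1 A n HY.
have h0 := div_ge0 (ltac:(lra) : 0 < subsum Y A n) (sizesum_ge0 A n HY).
have h1 := div_le (ltac:(lra) : 0 < subsum Y A n) (sizesum_le_card A n HY).
have := pos_INR #|infset Y|; rewrite -hN plus_INR; lra.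
Qed.

Lemma Dmap_finite_formula Y : (1 <= w)%nat -> allfin Y ->
  Dmap w Y = \big[Rplus/0]_(e : E) term (fpart (Y e)) (Rmap_fin w e Y).
Proof.
move=> w_pos fin; rewrite /Dmap -/(infset Y) infset0 // cards0 minn0 /= Rplus_0_r.
apply: eq_bigr => e _; rewrite fin; congr term.
by rewrite /Rmap /Rmap_fin Eprime_finite // infset0 // cards0 w_pos set0U subn0.
Qed.

End ClosedForm.

Section Continuity.
Variables (E : finType) (w : nat) (Y : E -> xR).
Hypotheses (w_pos : (1 <= w)%nat) (HY : nonnegY Y).
Implicit Types (Z : E -> xR) (A F S : {set E}).

(* Bound for the finite coordinates of Y, and of the vectors within
   distance 1 of Y on those coordinates. *)
Definition bnd : R := 1 + \big[Rplus/0]_(e : E) fpart (Y e).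

Lemma fpart_le_bnd g : 0 <= fpart (Y g) /\ fpart (Y g) + 1 <= bnd.
Proof.
have Yg0 := fpart_ge0 (HY g); split => //.
have : fpart (Y g) <= \big[Rplus/0]_(e : E) fpart (Y e).
  by apply: (sumR_ge_term (F := fun e => fpart (Y e))) => // i _; apply: fpart_ge0.
rewrite /bnd; lra.
Qed.

Lemma bnd_ge1 : 1 <= bnd.
Proof.
have : 0 <= \big[Rplus/0]_(e : E) fpart (Y e) by apply: sumR_ge0 => i _; apply: fpart_ge0.
rewrite /bnd; lra.
Qed.

(* Lipschitz constant of the monomials on the finite coordinates. *)
Definition lip : R := INR #|E| * bnd ^ #|E|.

Lemma lip_ge0 : 0 <= lip.
Proof. by apply: Rmult_le_pos; [apply: pos_INR | apply: pow_le; have := bnd_ge1; lra]. Qed.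

Section NearVector.
Variables (Z : E -> xR) (d M : R).
Hypotheses (HZ : nonnegY Z) (finZ : allfin Z) (d_ge0 : 0 <= d) (d_le1 : d <= 1)
  (M_ge1 : 1 <= M) (nearYZ : forall e, near_xR d M (Y e) (Z e)).

Lemma coord_large f : f \in infset Y -> M < fpart (Z f).
Proof. by rewrite inE; have := nearYZ f; have := finZ f; case: (Y f); case: (Z f). Qed.

Lemma coord_close g : g \notin infset Y ->
  Rabs (fpart (Z g) - fpart (Y g)) <= d /\ 0 <= fpart (Z g) <= bnd.
Proof.
rewrite inE; have := fpart_le_bnd g; have := nearYZ g; have := finZ g.
have := fpart_ge0 (HZ g); case: (Y g); case: (Z g) => // z y /= z0 _ hn [y0 yB] _.
by have [h1 h2] := Rabs_def2 _ _ hn; split; lra.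
Qed.

Lemma monom_close S : S \subset ~: infset Y -> Rabs (monom Z S - monom Y S) <= lip * d.
Proof.
move=> SF; rewrite /monom -!big_enum /=.
apply: Rle_trans.
  apply: (prodR_close bnd_ge1 d_ge0) => i; rewrite mem_enum => iS.
  have iF : i \notin infset Y by have := subsetP SF i iS; rewrite inE.
  have [Zi ZiB] := coord_close iF; have [Yi0 YiB] := fpart_le_bnd i.
  by repeat split; lra.
have -> : size (enum S) = #|S| by rewrite cardE.
rewrite /lip; apply: Rmult_le_compat_r => //.
have hc : (#|S| <= #|E|)%coq_nat by apply/leP; apply: max_card.
apply: Rmult_le_compat; [exact: pos_INR | apply: pow_le; have := bnd_ge1; lra
                        | exact: le_INR | apply: Rle_pow => //; exact: bnd_ge1].
Qed.

(* Weights that cannot contain all the large coordinates are negligible: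
   if S misses some f in F, then either f can be added to S, or S has a
   bounded coordinate g that can be exchanged for f; in both cases
   M Z^S <= bnd Z_f Z^S' <= bnd T for some admissible S' = S or S :\ g. *)
Lemma small_monomial S f : (#|S| <= w)%nat -> f \in infset Y -> f \notin S ->
  (#|S| < w)%nat \/ (exists2 g, g \in S & g \notin infset Y) ->
  monom Z S <= bnd * subsum Z setT w / M.
Proof.
move=> Sw fF fS exch.
have Zf := coord_large fF; have B1 := bnd_ge1.
have [S' [fS' S'w ZS]] : exists S', [/\ f \notin S', (#|f |: S'| <= w)%nat
                                     & monom Z S <= bnd * monom Z S'].
  case: exch => [Sw' | [g gS gF]].
    exists S; rewrite cardsU1 fS; split => //.
    by have := monom_ge0 S HZ; nra.
  exists (S :\ g); rewrite cardsU1 !inE (negbTE fS) andbF.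
  split => //; first by move: Sw; rewrite (cardsD1 g S) gS; lia.
  rewrite -{1}(setD1K gS) monomU1 ?setD11 //.
  have [_ [Zg0 ZgB]] := coord_close gF.
  by apply: Rmult_le_compat_r => //; apply: monom_ge0.
have ZfS' : fpart (Z f) * monom Z S' <= subsum Z setT w.
  rewrite -monomU1 //; apply: (sumR_ge_term (F := monom Z)); first by rewrite subsetT.
  by move=> T _; apply: monom_ge0.
have := monom_ge0 S' HZ; have := monom_ge0 S HZ => ZS0 ZS'0.
apply: (Rmult_le_reg_r M); first lra.
have -> : bnd * subsum Z setT w / M * M = bnd * subsum Z setT w by field; lra.
nra.
Qed.

(* With at least w infinite coordinates in Y, D(Z) is close to w = D(Y):
   the weights of the subsets of size less than w are negligible. *)
Lemma Dmap_near_many_inf : (w <= #|infset Y|)%nat ->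
  Rabs (Dmap w Z - INR w) <= INR #|{set E}| * INR w * bnd / M.
Proof.
move=> kw; rewrite Dmap_finite //.
have T1 := subsum_ge1 setT w HZ; set T := subsum Z setT w in T1 *.
have X0 : 0 <= bnd * T / M by apply: div_ge0; have := bnd_ge1; nra.
have deficit : INR w * T - sizesum Z setT w =
    \big[Rplus/0]_(S : {set E} | (S \subset setT) && (#|S| <= w)%nat)
      ((INR w - INR #|S|) * monom Z S).
  by rewrite /T /subsum /sizesum big_distrr /= -sumRB; apply: eq_bigr => S _; ring.
have term_bound S : (#|S| <= w)%nat ->
    0 <= (INR w - INR #|S|) * monom Z S <= INR w * (bnd * T / M).
  move=> Sw; have m0 := monom_ge0 S HZ; have hS := pos_INR #|S|.
  have hSw : INR #|S| <= INR w by apply/le_INR/leP.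
  case: (ltnP #|S| w) => Sw'; last first.
    have -> : #|S| = w by apply/eqP; rewrite eqn_leq Sw Sw'.
    by rewrite Rminus_diag Rmult_0_l; split; [lra | apply: Rmult_le_pos; lra].
  have [f fF fS] : exists2 f, f \in infset Y & f \notin S.
    by apply/subsetPn; apply/negP => /subset_leq_card; lia.
  have := small_monomial Sw fF fS (or_introl Sw'); rewrite -/T => mX.
  split; nra.
have [W0 WC] : 0 <= INR w * T - sizesum Z setT w <= INR #|{set E}| * (INR w * (bnd * T / M)).
  rewrite deficit; split; first by apply: sumR_ge0 => S /andP [_ /term_bound []].
  by apply: sumR_le_card => [|S /andP [_ /term_bound []]] //; apply: Rmult_le_pos => //; apply: pos_INR.
have -> : sizesum Z setT w / T - INR w = - ((INR w * T - sizesum Z setT w) / T) by field; lra.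
rewrite Rabs_Ropp Rabs_pos_eq; last by apply: div_ge0; lra.
apply: div_le; first lra.
have -> : INR #|{set E}| * INR w * bnd / M * T = INR #|{set E}| * (INR w * (bnd * T / M)).
  by field; lra.
exact: WC.
Qed.

(* With fewer than w infinite coordinates in Y, D(Z) is close to the mean
   size of the Z^S-weighted subsets S containing F = infset Y: the other
   weights form a negligible tail. *)
Lemma Dmap_near_few_inf : (#|infset Y| < w)%nat ->
  Rabs (Dmap w Z - mean_size_above w (infset Y) Z) <= INR #|{set E}| * INR w * bnd / M.
Proof.
move=> kw; rewrite Dmap_finite // /mean_size_above.
set F := infset Y in kw *; set n := (w - #|F|)%nat.
have Fw : (#|F| <= w)%nat by lia.
have T1 := subsum_ge1 setT w HZ; set T := subsum Z setT w in T1 *.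
have U1 := subsum_ge1 (~: F) n HZ; set U := subsum Z (~: F) n in U1 *.
set V := sizesum Z (~: F) n; set c := INR #|F| + V / U.
have [c0 cw] : 0 <= c <= INR w.
  have := div_ge0 (ltac:(lra) : 0 < U) (sizesum_ge0 (~: F) n HZ).
  have := div_le (ltac:(lra) : 0 < U) (sizesum_le (~: F) n HZ).
  have : INR #|F| + INR n = INR w by rewrite -plus_INR /n; congr INR; lia.
  by rewrite /c /V; have := pos_INR #|F|; lra.
have L0 : 0 <= tailsum w Z F by apply: sumR_ge0 => S _; apply: monom_ge0.
have L10 : 0 <= tailsizesum w Z F.
  by apply: sumR_ge0 => S _; apply: Rmult_le_pos; [apply: pos_INR | apply: monom_ge0].
have A0 : 0 <= monom Z F * U by have := monom_ge0 F HZ; nra.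
have T_split : T = monom Z F * U + tailsum w Z F by apply: subsum_split_superset.
have -> : sizesum Z setT w = c * (monom Z F * U) + tailsizesum w Z F.
  by rewrite (sizesum_split_superset Z Fw) -/n -/U -/V /c; field; lra.
have tail_small : tailsum w Z F <= INR #|{set E}| * (bnd * T / M).
  apply: sumR_le_card => [|S /andP [/andP [_ Sw] FS]].
    by apply: div_ge0; have := bnd_ge1; nra.
  have [f fF fS] := subsetPn FS; rewrite /T.
  apply: small_monomial Sw fF fS _.
  case: (ltnP #|S| w) => Sw'; [by left | right].
  by apply/subsetPn; rewrite -/F; apply/negP => /subset_leq_card; lia.
have T0 : 0 < monom Z F * U + tailsum w Z F by lra.
rewrite T_split; apply: Rle_trans (mixture_close A0 L0 T0 (conj c0 cw)
                                     (conj L10 (tailsizesum_le w F HZ))) _.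
rewrite -T_split; apply: div_le; first lra.
have -> : INR #|{set E}| * INR w * bnd / M * T = INR w * (INR #|{set E}| * (bnd * T / M)).
  by field; lra.
by apply: Rmult_le_compat_l => //; apply: pos_INR.
Qed.

Lemma subsum_close A n : A \subset ~: infset Y ->
  Rabs (subsum Z A n - subsum Y A n) <= INR #|{set E}| * (lip * d).
Proof.
move=> AF; rewrite /subsum -sumRB; apply: Rle_trans (sumR_abs _ _ _) _.
apply: sumR_le_card => [|S /andP [SA _]]; first by have := lip_ge0; nra.
exact: monom_close (subset_trans SA AF).
Qed.

Lemma sizesum_close A n : A \subset ~: infset Y ->
  Rabs (sizesum Z A n - sizesum Y A n) <= INR #|{set E}| * (INR #|E| * (lip * d)).
Proof.
move=> AF; rewrite /sizesum -sumRB; apply: Rle_trans (sumR_abs _ _ _) _.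
apply: sumR_le_card => [|S /andP [SA _]].
  by apply: Rmult_le_pos; [apply: pos_INR | apply: Rmult_le_pos => //; apply: lip_ge0].
rewrite -Rmult_minus_distr_l Rabs_mult Rabs_pos_eq; last exact: pos_INR.
apply: Rmult_le_compat; [exact: pos_INR | exact: Rabs_pos | | ].
  by apply/le_INR/leP/max_card.
exact: monom_close (subset_trans SA AF).
Qed.

Lemma mean_size_above_close :
  let F := infset Y in let n := (w - #|F|)%nat in
  Rabs (mean_size_above w F Z - mean_size_above w F Y)
    <= INR #|{set E}| * lip * (INR #|E| * subsum Y (~: F) n + sizesum Y (~: F) n) * d.
Proof.
move=> F n; rewrite /mean_size_above -/n.
have -> : forall k a b : R, k + a - (k + b) = a - b by move=> *; ring.
apply: Rle_trans (ratio_close _ (subsum_ge1 _ _ HZ) (subsum_ge1 _ _ HY)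
                                (sizesum_ge0 _ _ HY)) _.
have hU := subsum_close n (subxx (~: F)).
have hV := sizesum_close n (subxx (~: F)).
have U1 := subsum_ge1 (~: F) n HY; have V0 := sizesum_ge0 (~: F) n HY.
have := Rabs_pos (subsum Z (~: F) n - subsum Y (~: F) n).
have := Rabs_pos (sizesum Z (~: F) n - sizesum Y (~: F) n).
nra.
Qed.

End NearVector.

Lemma Dmap_cont_allfin eps : 0 < eps ->
  exists d, 0 < d /\ exists M, forall Z, nonnegY Z -> allfin Z ->
    (forall e, near_xR d M (Y e) (Z e)) -> Rabs (Dmap w Z - Dmap w Y) < eps.
Proof.
move=> eps0; set C := INR #|{set E}|.
have X0 : 0 <= C * INR w * bnd.
  by apply: Rmult_le_pos; [apply: Rmult_le_pos; apply: pos_INR | have := bnd_ge1; lra].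
case: (ltnP #|infset Y| w) => kw; last first.
  have [M [M1 hM]] := exists_large X0 eps0.
  exists 1; split; first lra; exists M => Z HZ finZ near.
  rewrite (Dmap_many_inf kw).
  exact: Rle_lt_trans (Dmap_near_many_inf HZ finZ (Rle_refl 1) M1 near kw) hM.
set F := infset Y; set n := (w - #|F|)%nat.
set Q := C * lip * (INR #|E| * subsum Y (~: F) n + sizesum Y (~: F) n).
have Q0 : 0 <= Q.
  have := subsum_ge1 (~: F) n HY; have := sizesum_ge0 (~: F) n HY; have := pos_INR #|E|.
  move=> *; apply: Rmult_le_pos; last by nra.
  by apply: Rmult_le_pos; [apply: pos_INR | apply: lip_ge0].
have [M [M1 hM]] := exists_large X0 (ltac:(lra) : 0 < eps / 2).
set d := Rmin 1 (eps / 2 / (Q + 1)).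
have d0 : 0 < d by apply: Rmin_pos; [lra | apply: Rdiv_lt_0_compat; lra].
have d1 : d <= 1 := Rmin_l _ _.
have dQ : Q * d < eps / 2.
  have : d <= eps / 2 / (Q + 1) := Rmin_r _ _.
  have : Q * (eps / 2 / (Q + 1)) + eps / 2 / (Q + 1) = eps / 2 by field; lra.
  have : 0 < eps / 2 / (Q + 1) by apply: Rdiv_lt_0_compat; lra.
  nra.
exists d; split => //; exists M => Z HZ finZ near.
have h1 := Dmap_near_few_inf HZ finZ d1 M1 near kw.
have h2 := mean_size_above_close HZ finZ (Rlt_le _ _ d0) d1 near.
rewrite (Dmap_few_inf HY kw).
have -> : Dmap w Z - mean_size_above w F Y =
  (Dmap w Z - mean_size_above w F Z) + (mean_size_above w F Z - mean_size_above w F Y) by ring.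
rewrite -/F -/C in h1; rewrite /= -/F -/n -/Q in h2.
by apply: Rle_lt_trans (Rabs_triang _ _) _; lra.
Qed.

End Continuity.

(* Continuity at Y: given Z near Y, let Z' replace the infinite coordinates
   of Z by a finite value beyond both thresholds.  Then Z' is all-finite and
   near both Y and Z, so D(Z') is close to both D(Y) and D(Z). *)
Lemma Dmap_continuous (E : finType) (w : nat) : (1 <= w)%nat ->
  continuous_on_xR (Dmap (E := E) w).
Proof.
move=> w_pos Y HY eps eps0.
have [d [d0 [M hM]]] := Dmap_cont_allfin w_pos HY (ltac:(lra) : 0 < eps / 2).
exists d; split => //; exists M => Z HZ nearYZ.
have [d' [d0' [M' hM']]] := Dmap_cont_allfin w_pos HZ (ltac:(lra) : 0 < eps / 2).
set big := Rmax (Rmax M M') 0 + 1.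
have [bM bM' b0] : [/\ M < big, M' < big & 0 <= big].
  have := Rmax_l M M'; have := Rmax_r M M'.
  have := Rmax_l (Rmax M M') 0; have := Rmax_r (Rmax M M') 0; rewrite /big; split; lra.
pose Z' e := if Z e is Fin z then Fin z else Fin big.
have HZ' : nonnegY Z' by move=> e; rewrite /Z'; have := HZ e; case: (Z e).
have finZ' : allfin Z' by move=> e; rewrite /Z'; case: (Z e).
have nearYZ' e : near_xR d M (Y e) (Z' e).
  by have := nearYZ e; rewrite /Z'; case: (Y e) => [y|]; case: (Z e).
have nearZZ' e : near_xR d' M' (Z e) (Z' e).
  by rewrite /Z'; case: (Z e) => [z|] //=; rewrite Rminus_diag Rabs_R0.
have h1 := hM Z' HZ' finZ' nearYZ'; have h2 := hM' Z' HZ' finZ' nearZZ'.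
have -> : Dmap w Z - Dmap w Y = (Dmap w Z' - Dmap w Y) - (Dmap w Z' - Dmap w Z) by ring.
by apply: Rle_lt_trans (Rabs_triang _ _) _; rewrite Rabs_Ropp; lra.
Qed.

Theorem mainTheorem5 (E : finType) (w : nat) (hw : (1 <= w)%N) :
  (forall Y : E -> xR, (forall e, nonneg_x (Y e)) ->
     (0 <= Dmap w Y <= INR #|E|)%R)
  /\ continuous_on_xR (Dmap (E := E) w)
  /\ (forall Y : E -> xR, (forall e, nonneg_x (Y e)) -> (forall e, isFin (Y e)) ->
       Dmap w Y = \big[Rplus/0%R]_(e : E) term (fpart (Y e)) (Rmap_fin w e Y)).
Proof.
split; first exact: Dmap_bounds.
split; first exact: Dmap_continuous.
by move=> Y _ fin; apply: Dmap_finite_formula.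
Qed.
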